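(* Let $G$ be a graph with $N\ge 1$ vertices and let $d,n,r$ be positive integers with $d\le n$. Call a sequence $S$ of $k$ vertices of $G$ rare if $|N(S)| \leq (2n)^{-2n}\,t_{K_{r,d}}(G)^{\frac{k}{rd}}N$. Call a sequence $T=(v_1,\ldots,v_r)$ of $r$ vertices of $G$ bad with respect to $k$ if the number of rare sequences of $k$ vertices all of whose entries lie in $N(T)$ is at least $\frac{1}{2n}|N(T)|^k$, and call $T$ good if for every $k$ with $d\le k\le n$ it is not bad with respect to $k$. Then $$\sum_{T \text{ good}} |N(T)|^d \geq \tfrac12 h_{K_{r,d}}(G),$$ where the sum is over all good sequences $T$ of $r$ vertices.
   Context: All graphs are finite and simple. Sequences of vertices may contain repeated vertices. For a sequence $S$ of vertices, the common neighborhood $N(S)$ is the set of vertices adjacent to every vertex of $S$. $h_F(G)$ is the number of homomorphisms from $F$ to $G$ (maps $V(F)\to V(G)$ sending edges to edges), and $t_F(G)=h_F(G)/|V(G)|^{|V(F)|}$. $K_{r,d}$ is the complete bipartite graph with parts of sizes $r$ and $d$. *)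

From mathcomp Require Import all_boot all_order all_algebra.
From mathcomp Require Import all_classical all_reals.
From mathcomp Require Import exp.
Unset Printing Implicit Defensive.
Import Order.TTheory GRing.Theory Num.Theory.
Local Open Scope ring_scope.

Definition simple_graph {V : finType} (e : rel V) : Prop :=
  symmetric e /\ irreflexive e.

Definition commonN {V : finType} (e : rel V) (S : seq V) : {set V} :=
  [set x | all (fun v => e v x) S].

(* h_{K_{r,d}}(G): homomorphisms from K_{r,d} (parts 'I_r and 'I_d) to G,
   i.e. pairs of maps f : 'I_r -> V, g : 'I_d -> V with every f i adjacent
   to every g j. *)
Definition hom_Krd {V : finType} (e : rel V) (r d : nat) : nat :=
  #|[set fg : {ffun 'I_r -> V} * {ffun 'I_d -> V} |
      [forall i, forall j, e (fg.1 i) (fg.2 j)]]|.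

Definition t_Krd (R : realType) {V : finType} (e : rel V) (r d : nat) : R :=
  (hom_Krd e r d)%:R / (#|V|%:R ^+ (r + d)).

Definition rare (R : realType) {V : finType} (e : rel V) (n r d k : nat)
    (S : k.-tuple V) : bool :=
  (#|commonN e S|%:R : R) <=
    ((2 * n)%:R ^- (2 * n)) * powR (t_Krd R e r d) (k%:R / (r * d)%:R)
      * #|V|%:R.

Definition num_rare_in (R : realType) {V : finType} (e : rel V) (n r d k : nat)
    (T : seq V) : nat :=
  #|[set S : k.-tuple V | all (fun v => v \in commonN e T) S
                          && rare R e n r d k S]|.

Definition bad (R : realType) {V : finType} (e : rel V) (n r d k : nat)
    (T : r.-tuple V) : bool :=
  (num_rare_in R e n r d k T)%:R >=
    (2 * n)%:R^-1 * (#|commonN e T|%:R ^+ k : R).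

Definition good (R : realType) {V : finType} (e : rel V) (n r d : nat)
    (T : r.-tuple V) : bool :=
  [forall k : 'I_n.+1, (d <= k)%N ==> ~~ bad R e n r d k T].

From mathcomp Require Import all_boot all_order all_algebra.
From mathcomp Require Import reals exp.
From mathcomp Require Import ring lra zify.

(* Double counting the pairs (T, S) with S a rare k-sequence inside N(T) gives
   sum_T #rare(T) = sum_(S rare) |N(S)|^r <= (eps t^(k/rd) N)^r N^k, where
   eps = (2n)^(-2n).  A bad T has
   |N(T)|^k <= 2n #rare(T), so the k-th moment of |N(T)| over bad T is small, and
   the power-mean inequality (Young) turns this into a bound on the d-th moment:
   sum_(T bad) |N(T)|^d <= h / 2n, where h = sum_T |N(T)|^d = t N^(r+d).  Since
   only the n values d <= k <= n matter, the non-good T contribute at most h / 2. *)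

Set Implicit Arguments.
Unset Strict Implicit.
Unset Printing Implicit Defensive.

Import Order.TTheory GRing.Theory Num.Theory.

Section TupleCounting.
Variable W : finType.

Lemma mktuple_bij m : bijective (fun g : {ffun 'I_m -> W} => [tuple g i | i < m]).
Proof.
exists (fun t : m.-tuple W => [ffun i => tnth t i]) => [g | t].
  by apply/ffunP => i; rewrite ffunE tnth_mktuple.
by apply: eq_from_tnth => i; rewrite tnth_mktuple ffunE.
Qed.

Lemma card_tuple_all_in m (A : {pred W}) :
  #|[set t : m.-tuple W | all (fun v => v \in A) t]| = #|A| ^ m.
Proof.
rewrite -[in RHS](card_ord m) -card_ffun_on.
rewrite -(card_image (bij_inj (mktuple_bij m))).
apply: eq_card => t; rewrite inE; apply/all_tnthP/imageP => [tA | [g /ffun_onP gA ->] i].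
  exists [ffun i => tnth t i]; first by apply/ffun_onP => i; rewrite ffunE.
  by apply: eq_from_tnth => i; rewrite tnth_mktuple ffunE.
by rewrite tnth_mktuple.
Qed.

End TupleCounting.

Lemma all_in_commonN_sym (V : finType) (e : rel V) (S T : seq V) :
  symmetric e ->
  all (fun v => v \in commonN e T) S = all (fun v => v \in commonN e S) T.
Proof.
move=> e_sym; apply/allP/allP => in_N v v_in; rewrite inE; apply/allP => w w_in.
  by have := in_N w w_in; rewrite inE => /allP /(_ v v_in); rewrite e_sym.
by have := in_N w w_in; rewrite inE => /allP /(_ v v_in); rewrite e_sym.
Qed.

Lemma hom_KrdE (V : finType) (e : rel V) (r d : nat) :
  hom_Krd e r d = \sum_(T : r.-tuple V) #|commonN e T| ^ d.
Proof.
rewrite /hom_Krd -sum1dep_card.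
transitivity (\sum_(f : {ffun 'I_r -> V})
                \sum_(g : {ffun 'I_d -> V} | [forall i, forall j, e (f i) (g j)]) 1).
  by rewrite pair_big_dep.
rewrite (reindex _ (onW_bij _ (mktuple_bij V r))).
apply: eq_bigr => f _; rewrite sum1dep_card -[d in RHS]card_ord -card_ffun_on.
apply: eq_card => g; rewrite inE; apply/forallP/ffun_onP => fg x.
  rewrite inE; apply/all_tnthP => i; rewrite tnth_mktuple; exact: (forallP (fg i) x).
apply/forallP => j; have := fg j; rewrite inE => /all_tnthP/(_ x).
by rewrite tnth_mktuple.
Qed.

Lemma sum_card_tuples_in_commonN (V : finType) (e : rel V) (r k : nat)
    (Q : pred (k.-tuple V)) :
  symmetric e ->
  \sum_(T : r.-tuple V) #|[set S : k.-tuple V | all (fun v => v \in commonN e T) S && Q S]|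
    = \sum_(S : k.-tuple V | Q S) #|commonN e S| ^ r.
Proof.
move=> e_sym; under eq_bigr do rewrite -sum1dep_card.
rewrite (exchange_big_dep Q) /= => [|T S _ /andP[] //].
apply: eq_bigr => S QS; rewrite -card_tuple_all_in -sum1dep_card.
by apply: eq_bigl => T; rewrite QS andbT all_in_commonN_sym.
Qed.

Local Open Scope ring_scope.

Lemma ler_sum_subpred {R : numDomainType} {I : finType} (P : pred I) (F : I -> R) :
  (forall i, 0 <= F i) -> \sum_(i | P i) F i <= \sum_i F i.
Proof.
by move=> F_ge0; rewrite [leRHS](bigID P) /= lerDl sumr_ge0.
Qed.

Lemma ler_sum_cover {R : numDomainType} {I J : finType} (K : pred J) (P : pred I)
    (Q : J -> pred I) (F : I -> R) :
  (forall i, 0 <= F i) -> (forall i, P i -> exists2 j, K j & Q j i) ->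
  \sum_(i | P i) F i <= \sum_(j | K j) \sum_(i | Q j i) F i.
Proof.
move=> F_ge0 PKQ; rewrite (exchange_big_dep xpredT) //=.
apply: (le_trans (y := \sum_(i | P i) \sum_(j | K j && Q j i) F i)).
  apply: ler_sum => i /PKQ[j Kj Qji].
  by rewrite (bigD1 j) ?Kj //= lerDl sumr_ge0.
by apply: ler_sum_subpred => i; apply: sumr_ge0.
Qed.

Lemma sumr_const_ord_geq {V : nmodType} (n d : nat) (x : V) :
  \sum_(k < n | (d <= k)%N) x = x *+ (n - d).
Proof. by rewrite -sumr_const_nat big_geq_mkord. Qed.

Lemma exprn_powR (R : realType) (x a : R) (m : nat) :
  0 <= x -> x `^ a ^+ m = x `^ (a * m%:R).
Proof. by move=> x_ge0; rewrite powRrM powR_mulrn // powR_ge0. Qed.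

Section PowerMean.
Variable R : realType.

Lemma exprn_le_young (y : R) (d k : nat) : (0 < d < k)%N -> 0 <= y ->
  y ^+ d <= d%:R / k%:R * y ^+ k + (1 - d%:R / k%:R).
Proof.
move=> /andP[d_gt0 dk] y_ge0.
have k_gt0 : (0 < k%:R :> R) by rewrite ltr0n (ltn_trans d_gt0).
have d_gt0' : (0 < d%:R :> R) by rewrite ltr0n.
have kd_gt0 : (0 < (k - d)%:R :> R) by rewrite ltr0n subn_gt0.
have := @conjugate_powR R (y ^+ d) 1 (k%:R / d%:R) (k%:R / (k - d)%:R).
rewrite mulr1 powR1 !invf_div => /(_ (exprn_ge0 d y_ge0) ler01).
rewrite !divr_gt0 // => /(_ isT isT).
have -> : (y ^+ d) `^ (k%:R / d%:R) = y ^+ k.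
  by rewrite -powR_mulrn // -powRrM mulrC divfK ?gt_eqF // powR_mulrn.
have -> : (k - d)%:R / k%:R = 1 - d%:R / k%:R :> R.
  by rewrite natrB ?(ltnW dk) // mulrBl divff ?gt_eqF.
rewrite mul1r => young; rewrite mulrC; apply: young.
by rewrite addrC subrK.
Qed.

Lemma sum_exprn_le (I : finType) (P : pred I) (x : I -> R) (d k : nat) (M : R) :
  (0 < d <= k)%N -> (forall i, 0 <= x i) ->
  \sum_(i | P i) x i ^+ k <= M -> #|P|%:R <= M -> \sum_(i | P i) x i ^+ d <= M.
Proof.
move=> /andP[d_gt0]; rewrite leq_eqVlt => /predU1P[<- //|dk] x_ge0 sumk_le card_le.
set c := d%:R / k%:R : R.
have c_ge0 : 0 <= c by rewrite divr_ge0.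
have c_le1 : c <= 1 by rewrite ler_pdivrMr ?ltr0n ?(ltn_trans d_gt0) // mul1r ler_nat ltnW.
apply: (le_trans (y := \sum_(i | P i) (c * x i ^+ k + (1 - c)))).
  by apply: ler_sum => i _; apply: exprn_le_young; rewrite ?d_gt0.
rewrite big_split /= -mulr_sumr sumr_const -mulr_natr.
have -> : M = c * M + (1 - c) * M by ring.
by rewrite lerD // (ler_wpM2l, ler_wpM2r) // subr_ge0.
Qed.

Lemma sum_exprn_le_scaled (I : finType) (P : pred I) (x : I -> R) (d k : nat)
    (lam M : R) :
  (0 < d <= k)%N -> 0 < lam -> (forall i, 0 <= x i) ->
  \sum_(i | P i) x i ^+ k <= lam ^+ k * M -> #|P|%:R <= M ->
  \sum_(i | P i) x i ^+ d <= lam ^+ d * M.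
Proof.
move=> dk lam_gt0 x_ge0 sumk_le card_le.
have lamX_gt0 m : 0 < lam ^+ m by rewrite exprn_gt0.
have sum_scale m : \sum_(i | P i) x i ^+ m = lam ^+ m * \sum_(i | P i) (x i / lam) ^+ m.
  rewrite mulr_sumr; apply: eq_bigr => i _.
  by rewrite expr_div_n mulrC divfK ?gt_eqF.
rewrite sum_scale ler_pM2l //.
apply: (@sum_exprn_le I P (fun i => x i / lam) d k M dk) => [i||//].
  exact: divr_ge0 (x_ge0 i) (ltW lam_gt0).
by rewrite -(ler_pM2l (lamX_gt0 k)) -sum_scale.
Qed.

End PowerMean.

Lemma powR_rare_factor_le (R : realType) (n r d k : nat) :
  (0 < n)%N -> (0 < r)%N -> (0 < d)%N -> (d <= k <= n)%N ->
  powR ((2 * n)%:R * ((2 * n)%:R ^- (2 * n)) ^+ r) (d%:R / k%:R) <= ((2 * n)%:R : R)^-1.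
Proof.
move=> n_gt0 r_gt0 d_gt0 /andP[dk kn].
(* The factor is a^(2nr-1) <= a^n with a = 1/2n, and d/k >= 1/n. *)
set a := ((2 * n)%:R : R)^-1.
have a_gt0 : 0 < a by rewrite invr_gt0 ltr0n; lia.
have a_le1 : a <= 1 by rewrite invf_le1 ?ler1n ?ltr0n; lia.
have n_gt0' : (0 < n%:R :> R) by rewrite ltr0n.
have -> : (2 * n)%:R * ((2 * n)%:R ^- (2 * n)) ^+ r = a ^+ (2 * n * r - 1) :> R.
  rewrite -exprVn -exprM [in LHS](_ : 2 * n * r = (2 * n * r - 1).+1)%N; last by lia.
  by rewrite exprSr mulrCA mulfV ?mulr1 // gt_eqF // ltr0n; lia.
have an_nneg : a ^+ n \in Num.nneg by rewrite nnegrE exprn_ge0 // ltW.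
have ac_le_an : a ^+ (2 * n * r - 1) <= a ^+ n.
  have nr : (n <= 2 * n * r - 1)%N by nia.
  exact: ler_wiXn2l (ltW a_gt0) a_le1 _ _ nr.
have ac_nneg : a ^+ (2 * n * r - 1) \in Num.nneg by rewrite nnegrE exprn_ge0 // ltW.
have dk_ge0 : 0 <= d%:R / k%:R :> R by rewrite divr_ge0.
apply: (le_trans (ge0_ler_powR dk_ge0 ac_nneg an_nneg ac_le_an)).
have inv_n_le : n%:R^-1 <= d%:R / k%:R :> R.
  have k_gt0 : (0 < k%:R :> R) by rewrite ltr0n; lia.
  rewrite ler_pdivlMr // mulrC ler_pdivrMr // -natrM ler_nat.
  by rewrite (leq_trans kn) // leq_pmull.
apply: (le_trans (ger_powR _ inv_n_le)); first by rewrite exprn_gt0 // exprn_ile1 // ltW.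
by rewrite -powR_mulrn ?(ltW a_gt0) // -powRrM mulfV ?gt_eqF // powRr1 // ltW.
Qed.

Section BadSequences.
Variables (R : realType) (V : finType) (e : rel V) (n r d k : nat).
Hypotheses (e_sym : symmetric e) (n_gt0 : (0 < n)%N).

Let N : R := #|V|%:R.
Let t : R := t_Krd R e r d.
Let rho : R := (2 * n)%:R ^- (2 * n) * powR t (k%:R / (r * d)%:R) * N.

Lemma sum_num_rare_in_le :
  \sum_(T : r.-tuple V) (num_rare_in R e n r d k T)%:R <= rho ^+ r * N ^+ k.
Proof.
rewrite -natr_sum /num_rare_in sum_card_tuples_in_commonN // natr_sum.
have rho_ge0 : 0 <= rho by rewrite !mulr_ge0 ?powR_ge0 ?invr_ge0 ?exprn_ge0.
apply: (le_trans (y := \sum_(S : k.-tuple V | rare R e n r d k S) rho ^+ r)).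
  by apply: ler_sum => S rareS; rewrite natrX lerXn2r ?nnegrE.
rewrite sumr_const -[rho ^+ r *+ _]mulr_natr; apply: ler_wpM2l; first exact: exprn_ge0.
by rewrite /N -(natrX _ #|V| k) ler_nat -card_tuple max_card.
Qed.

Lemma sum_bad_exprk_le :
  \sum_(T : r.-tuple V | bad R e n r d k T) (#|commonN e T|%:R ^+ k : R)
    <= (2 * n)%:R * (rho ^+ r * N ^+ k).
Proof.
have n2_gt0 : (0 < (2 * n)%:R :> R) by rewrite ltr0n muln_gt0.
apply: (le_trans (y := \sum_(T | bad R e n r d k T)
                          (2 * n)%:R * (num_rare_in R e n r d k T)%:R)).
  by apply: ler_sum => T; rewrite /bad -ler_pdivrMl // mulrC.
apply: (le_trans (ler_sum_subpred _ _)) => [T|].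
  exact: mulr_ge0 (ltW n2_gt0) (ler0n _ _).
by rewrite -mulr_sumr ler_wpM2l ?(ltW n2_gt0) // sum_num_rare_in_le.
Qed.

Hypotheses (V_gt0 : (0 < #|V|)%N) (r_gt0 : (0 < r)%N) (d_gt0 : (0 < d)%N).
Hypotheses (dkn : (d <= k <= n)%N) (hom_gt0 : (0 < hom_Krd e r d)%N).

Lemma sum_bad_le :
  \sum_(T : r.-tuple V | bad R e n r d k T) (#|commonN e T|%:R ^+ d : R)
    <= (2 * n)%:R^-1 * (hom_Krd e r d)%:R.
Proof.
have [k_gt0 d_gt0' k_gt0'] : [/\ (0 < k)%N, 0 < d%:R :> R & 0 < k%:R :> R].
  by move: dkn => /andP[dk _]; rewrite !ltr0n (leq_trans d_gt0).
set h : R := (hom_Krd e r d)%:R.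
have N_gt0 : 0 < N by rewrite ltr0n.
have hE : h = t * N ^+ (r + d) by rewrite /t /t_Krd divfK // expf_neq0 // gt_eqF.
have t_gt0 : 0 < t by rewrite /t /t_Krd divr_gt0 ?exprn_gt0 ?ltr0n.
set c : R := (2 * n)%:R * ((2 * n)%:R ^- (2 * n)) ^+ r.
have c_gt0 : 0 < c by rewrite mulr_gt0 ?exprn_gt0 ?invr_gt0 ?exprn_gt0 // ltr0n muln_gt0.
(* lam ^+ k * N ^+ r is the double-counting bound and lam ^+ d * N ^+ r = c^(d/k) h. *)
set lam := c `^ k%:R^-1 * t `^ d%:R^-1 * N.
have lam_gt0 : 0 < lam by rewrite !mulr_gt0 ?powR_gt0.
have lamkE : (2 * n)%:R * (rho ^+ r * N ^+ k) = lam ^+ k * N ^+ r.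
  rewrite /lam /rho !exprMn !exprn_powR ?ltW // mulVf ?gt_eqF // powRr1 ?ltW //.
  have -> : k%:R / (r * d)%:R * r%:R = d%:R^-1 * k%:R :> R.
    by rewrite natrM; field; rewrite !gt_eqF // ltr0n.
  by rewrite /c; ring.
have sumk_le := sum_bad_exprk_le; rewrite lamkE in sumk_le.
have card_le : #|[pred T : r.-tuple V | bad R e n r d k T]|%:R <= N ^+ r.
  by rewrite /N -natrX ler_nat -card_tuple max_card.
have d_le_k : (0 < d <= k)%N by case/andP: dkn => -> _; rewrite d_gt0.
apply: (le_trans (sum_exprn_le_scaled d_le_k lam_gt0 _ sumk_le card_le)) => [T|].
  exact: ler0n.
have -> : lam ^+ d * N ^+ r = c `^ (d%:R / k%:R) * h.
  rewrite /lam !exprMn !exprn_powR ?ltW // mulVf ?gt_eqF // powRr1 ?ltW // hE exprD.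
  by rewrite [d%:R / k%:R]mulrC; ring.
by rewrite ler_wpM2r ?ler0n // powR_rare_factor_le.
Qed.

End BadSequences.

Lemma sum_not_good_le (R : realType) (V : finType) (e : rel V) (n r d : nat) :
  symmetric e -> (0 < #|V|)%N -> (0 < d)%N -> (0 < n)%N -> (0 < r)%N -> (d <= n)%N ->
  (0 < hom_Krd e r d)%N ->
  \sum_(T : r.-tuple V | ~~ good R e n r d T) (#|commonN e T|%:R ^+ d : R)
    <= 2^-1 * (hom_Krd e r d)%:R.
Proof.
move=> e_sym V_gt0 d_gt0 n_gt0 r_gt0 dn hom_gt0.
set h : R := (hom_Krd e r d)%:R.
apply: (le_trans (ler_sum_cover (K := fun k : 'I_n.+1 => (d <= k)%N)
                   (Q := fun k T => bad R e n r d k T) _ _)) => [T|T|].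
- exact: exprn_ge0.
- rewrite /good negb_forall => /existsP[k]; rewrite negb_imply negbK.
  by case/andP; exists k.
apply: (le_trans (y := \sum_(k < n.+1 | (d <= k)%N) (2 * n)%:R^-1 * h)).
  apply: ler_sum => k dk; apply: sum_bad_le => //.
  by rewrite dk -ltnS ltn_ord.
rewrite sumr_const_ord_geq -[_ *+ _]mulr_natr.
have -> : 2^-1 * h = (2 * n)%:R^-1 * h * n%:R by rewrite natrM; field; rewrite pnatr_eq0 -lt0n.
by apply: ler_wpM2l; rewrite ?mulr_ge0 ?invr_ge0 // ler_nat; lia.
Qed.

Theorem lemma2p1 (R : realType) (V : finType) (e : rel V) (n r d : nat) :
  simple_graph e -> (0 < #|V|)%N ->
  (0 < d)%N -> (0 < n)%N -> (0 < r)%N -> (d <= n)%N ->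
  \sum_(T : r.-tuple V | good R e n r d T) (#|commonN e T|%:R ^+ d : R)
    >= 2^-1 * (hom_Krd e r d)%:R.
Proof.
move=> [e_sym _] V_gt0 d_gt0 n_gt0 r_gt0 dn.
have [->|hom_gt0] := posnP (hom_Krd e r d).
  by rewrite mulr0 sumr_ge0 // => T _; rewrite exprn_ge0.
have := sum_not_good_le R e_sym V_gt0 d_gt0 n_gt0 r_gt0 dn hom_gt0.
have : (hom_Krd e r d)%:R = \sum_(T : r.-tuple V) (#|commonN e T|%:R ^+ d : R).
  by rewrite hom_KrdE natr_sum; apply: eq_bigr => T _; rewrite natrX.
rewrite (bigID (good R e n r d)) /=; lra.
Qed.
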